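(* Let $n\ge 1$ and let $\mathcal{C}$ be a clique partition of the complete graph $K_n$ all of whose cliques have at most $n-1$ vertices. Then $\sum_{C\in\mathcal{C}}|C|\ge 3n-3$.
   Context: A clique in a graph $G$ is a set of pairwise adjacent vertices. A clique partition of $G$ is a family $\mathcal{C}$ of cliques of $G$ such that every edge of $G$ has both endpoints in exactly one member of $\mathcal{C}$. *)

From mathcomp Require Import all_boot.
Set Implicit Arguments. Unset Strict Implicit. Unset Printing Implicit Defensive.

(* A simple graph on a finite vertex type T is a symmetric irreflexive
   relation e : rel T; {x,y} is an edge iff e x y. *)

Definition complete_graph (n : nat) : rel 'I_n := fun x y => x != y.

Definition is_clique (T : finType) (e : rel T) (C : {set T}) : Prop :=
  forall x y, x \in C -> y \in C -> x != y -> e x y.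

Definition clique_partition (T : finType) (e : rel T) (P : {set {set T}}) : Prop :=
  (forall C, C \in P -> is_clique e C) /\
  (forall x y, e x y -> #|[set C in P | (x \in C) && (y \in C)]| = 1).

From mathcomp Require Import all_boot zify.
Set Implicit Arguments. Unset Strict Implicit. Unset Printing Implicit Defensive.

(* Let r(v) be the number of cliques of the partition containing v, so that
   the sum of the clique sizes is the sum of the r(v).  The cliques through v
   cover the n - 1 other vertices, so r(v) (k - 1) >= n - 1 when every clique
   has at most k vertices; with k = n - 1 this gives r(v) >= 2.  Let C0 be a
   largest clique, k = |C0|.  Distinct cliques share at most one vertex, so
   each v outside C0 needs k cliques to reach the vertices of C0, whence
   sum r(v) >= 2k + (n - k) k >= 3n - 3 as soon as 3 <= k <= n - 1.  If k = 2
   then r(v) >= n - 1 for all v, and n (n - 1) >= 3n - 3. *)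

Definition clique_degree (T : finType) (P : {set {set T}}) (v : T) : nat :=
  #|[set C in P | v \in C]|.

Lemma sum_card_eq_sum_clique_degree (T : finType) (P : {set {set T}}) :
  \sum_(C in P) #|C| = \sum_v clique_degree P v.
Proof.
under eq_bigr => C _ do rewrite -sum1_card.
rewrite (exchange_big_dep predT) //=; apply: eq_bigr => v _.
by rewrite sum1dep_card.
Qed.

Lemma leq_card_bigcup (T I : finType) (A : pred I) (F : I -> {set T}) :
  #|\bigcup_(i in A) F i| <= \sum_(i in A) #|F i|.
Proof.
elim/big_ind2: _ => [|m X k Y leX leY|//]; first by rewrite cards0.
exact: leq_trans (leq_card_setU X Y) (leq_add leX leY).
Qed.

Section CliquePartitionOfCompleteGraph.

Variables (n : nat) (P : {set {set 'I_n}}).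
Hypothesis partP : clique_partition (@complete_graph n) P.

Lemma common_clique x y : x != y -> exists2 C, C \in P & (x \in C) && (y \in C).
Proof.
move=> neq_xy; have : 0 < #|[set C in P | (x \in C) && (y \in C)]|.
  by rewrite (proj2 partP x y neq_xy).
by case/card_gt0P => C; rewrite inE => /andP[]; exists C.
Qed.

Lemma card_meet_le1 C D : C \in P -> D \in P -> C != D -> #|C :&: D| <= 1.
Proof.
move=> CP DP neq_CD; rewrite leqNgt; apply/card_gt1P => -[x [y []]].
rewrite !inE => /andP[xC xD] /andP[yC yD] neq_xy.
have : #|[set C; D]| <= #|[set E in P | (x \in E) && (y \in E)]|.
  by apply/subset_leq_card/subsetP => E; rewrite !inE => /orP[]/eqP->; apply/and3P.
by rewrite (proj2 partP x y neq_xy) cards2 neq_CD.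
Qed.

(* The cliques through [v] cover every other vertex, since it is adjacent to [v]. *)
Lemma card_le_clique_degree v (S : {set 'I_n}) m :
  v \notin S -> (forall C, C \in P -> v \in C -> #|C :&: S| <= m) ->
  #|S| <= clique_degree P v * m.
Proof.
move=> vNS leCS; rewrite /clique_degree -sum_nat_const.
have coverS : S \subset \bigcup_(C in [set C in P | v \in C]) (C :&: S).
  apply/subsetP => x xS; have neq_vx : v != x by apply: contraNneq vNS => ->.
  have [C CP /andP[vC xC]] := common_clique neq_vx.
  by apply/bigcupP; exists C; rewrite !inE ?CP ?vC ?xC ?xS.
apply: leq_trans (subset_leq_card coverS) _; apply: leq_trans (leq_card_bigcup _ _) _.
by apply: leq_sum => C; rewrite inE => /andP[]; apply: leCS.
Qed.

Lemma clique_degree_lower_bound v m :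
  (forall C, C \in P -> #|C| <= m) -> n - 1 <= clique_degree P v * (m - 1).
Proof.
move=> leCm; have := @card_le_clique_degree v [set~ v] (m - 1).
rewrite cardsC1 card_ord setC11 -subn1; apply=> // C CP vC.
by have := leCm C CP; rewrite (cardsD1 v C) vC -setDE; lia.
Qed.

Lemma card_le_clique_degree_outside C0 v :
  C0 \in P -> v \notin C0 -> #|C0| <= clique_degree P v.
Proof.
move=> C0P vNC0; rewrite -[clique_degree _ _]muln1.
apply: card_le_clique_degree => // C CP vC.
by apply: card_meet_le1 => //; apply: contraNneq vNC0 => <-.
Qed.

Lemma clique_degree_ge2 v :
  1 < n -> (forall C, C \in P -> #|C| <= n - 1) -> 2 <= clique_degree P v.
Proof. by move=> n_gt1 /(clique_degree_lower_bound v); nia. Qed.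

Lemma sum_clique_degree_ge C0 :
  1 < n -> (forall C, C \in P -> #|C| <= n - 1) -> C0 \in P ->
  #|C0| * 2 + (n - #|C0|) * #|C0| <= \sum_v clique_degree P v.
Proof.
move=> n_gt1 small C0P.
have sum_in : #|C0| * 2 <= \sum_(v in C0) clique_degree P v.
  by rewrite -sum_nat_const; apply: leq_sum => v _; apply: clique_degree_ge2.
have sum_out : #|~: C0| * #|C0| <= \sum_(v | v \notin C0) clique_degree P v.
  rewrite -sum_nat_cond_const; apply: leq_sum => v.
  exact: card_le_clique_degree_outside.
have <- : #|~: C0| = n - #|C0| by rewrite cardsCs card_ord setCK.
by rewrite (bigID (mem C0)) leq_add.
Qed.

End CliquePartitionOfCompleteGraph.

Theorem mainTheorem2 (n : nat) (P : {set {set 'I_n}}) :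
  1 <= n ->
  clique_partition (@complete_graph n) P ->
  (forall C, C \in P -> #|C| <= n - 1) ->
  3 * n - 3 <= \sum_(C in P) #|C|.
Proof.
move=> n_ge1 partP small.
have [n_le1 | n_gt1] := leqP n 1; first by rewrite (_ : 3 * n - 3 = 0) //; lia.
pose x : 'I_n := Ordinal (ltnW n_gt1); pose y : 'I_n := Ordinal n_gt1.
have [C1 C1P _] := @common_clique _ _ partP x y isT.
have [C0 C0P C0max] := @arg_maxnP _ C1 (mem P) (fun C => #|C|) C1P.
have k_le : #|C0| <= n - 1 := small C0 C0P.
have deg_ge v : n - 1 <= clique_degree P v * (#|C0| - 1).
  exact: clique_degree_lower_bound.
have k_ge2 : 2 <= #|C0| by move: (deg_ge x); nia.
rewrite sum_card_eq_sum_clique_degree.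
have [k_le2 | k_ge3] := leqP #|C0| 2.
  have deg_ge_pred v : n - 1 <= clique_degree P v by move: (deg_ge v); nia.
  apply: (@leq_trans (\sum_(v : 'I_n) (n - 1))); last exact: leq_sum.
  rewrite sum_nat_const card_ord; nia.
apply: leq_trans (sum_clique_degree_ge partP n_gt1 small C0P); nia.
Qed.
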